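(* Let $N$ be a smooth positive function on an open interval of $r$-values, let $a$ be a constant such that $F(r)=\int_a^r\frac{1}{N(\mu)}\,\mathrm{d}\mu$ is defined and has a smooth inverse $F^{-1}$ defined on an open interval $I$, and set $b_1(t)=N(F^{-1}(t))$, $b_2(t)=F^{-1}(t)$ for $t\in I$, with $b_2>0$. Consider the $(2+1)$-dimensional Lorentzian multiply warped product $I\times{}_{b_1}F_1\times{}_{b_2}F_2$ with $F_1,F_2$ one-dimensional Riemannian manifolds with coordinates $x,\phi$ and metric $\mathrm{d}s^2=-\mathrm{d}t^2+b_1^2(t)\,\mathrm{d}x^2+b_2^2(t)\,\mathrm{d}\phi^2$. Then this space-time is Einstein with Ricci curvature $\lambda$ if and only if the square lapse function satisfies $N^2(r)=\frac{\lambda}{2}r^2+c_2$ for some constant $c_2$ (that is, $N^2(r)=\frac{\lambda}{2}r^2+c_1r+c_2$ with $c_1=0$).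
   Context: A pseudo-Riemannian manifold $(M,h)$ is Einstein with Ricci curvature $\lambda$ if $\mathrm{Ric}=\lambda h$. *)

From Stdlib Require Import Reals Lra Arith.
From Coquelicot Require Import Coquelicot.
Open Scope R_scope.

Definition in_oint (lo hi : Rbar) (x : R) : Prop := Rbar_lt lo x /\ Rbar_lt x hi.

Definition smooth_on (J : R -> Prop) (f : R -> R) : Prop :=
  forall (n : nat) (x : R), J x -> ex_derive_n f n x.

(* A point of the chart is p : nat -> R, coordinates p 0, p 1, p 2.
   Indices range over {0,1,2}. *)
Definition pt := nat -> R.

Definition upd (p : pt) (i : nat) (s : R) : pt :=
  fun j => if Nat.eqb j i then s else p j.

Definition pd (i : nat) (f : pt -> R) (p : pt) : R :=
  Derive (fun s => f (upd p i s)) (p i).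

Definition sum3 (f : nat -> R) : R := f 0%nat + f 1%nat + f 2%nat.

Definition metric := nat -> nat -> pt -> R.

Definition det3 (m : nat -> nat -> R) : R :=
  m 0%nat 0%nat * (m 1%nat 1%nat * m 2%nat 2%nat - m 1%nat 2%nat * m 2%nat 1%nat)
  - m 0%nat 1%nat * (m 1%nat 0%nat * m 2%nat 2%nat - m 1%nat 2%nat * m 2%nat 0%nat)
  + m 0%nat 2%nat * (m 1%nat 0%nat * m 2%nat 1%nat - m 1%nat 1%nat * m 2%nat 0%nat).

(* cofactor of a 3x3 matrix (cyclic index formula, signs included) *)
Definition cof3 (m : nat -> nat -> R) (i j : nat) : R :=
  let i1 := ((i + 1) mod 3)%nat in let i2 := ((i + 2) mod 3)%nat in
  let j1 := ((j + 1) mod 3)%nat in let j2 := ((j + 2) mod 3)%nat in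
  m i1 j1 * m i2 j2 - m i1 j2 * m i2 j1.

Definition ginv (g : metric) (i j : nat) (p : pt) : R :=
  cof3 (fun a b => g a b p) j i / det3 (fun a b => g a b p).

Definition christoffel (g : metric) (k i j : nat) (p : pt) : R :=
  / 2 * sum3 (fun l => ginv g k l p *
     (pd i (g j l) p + pd j (g i l) p - pd l (g i j) p)).

Definition ricci (g : metric) (i j : nat) (p : pt) : R :=
  sum3 (fun k => pd k (christoffel g k i j) p)
  - sum3 (fun k => pd j (christoffel g k k i) p)
  + sum3 (fun k => sum3 (fun l => christoffel g k k l p * christoffel g l i j p))
  - sum3 (fun k => sum3 (fun l => christoffel g k j l p * christoffel g l k i p)).

Definition einstein_on (U : pt -> Prop) (g : metric) (lam : R) : Prop :=
  forall p, U p -> forall i j, (i < 3)%nat -> (j < 3)%nat ->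
    ricci g i j p = lam * g i j p.

(* the metric -dt^2 + b1(t)^2 dx^2 + b2(t)^2 dphi^2, coordinates (t,x,phi) *)
Definition mwp_metric (b1 b2 : R -> R) : metric :=
  fun i j p =>
    match i, j with
    | 0%nat, 0%nat => -1
    | 1%nat, 1%nat => (b1 (p 0%nat)) ^ 2
    | 2%nat, 2%nat => (b2 (p 0%nat)) ^ 2
    | _, _ => 0
    end.

Definition Fint (N : R -> R) (a r : R) : R := RInt (fun mu => / N mu) a r.

From Stdlib Require Import Reals Lra Lia.
From Coquelicot Require Import Coquelicot.
Open Scope R_scope.

(* With [f = Finv], differentiating [F (f t) = t] gives [f' = N o f], so the warping
   functions are [b1 = f'] and [b2 = f].  The metric [-dt^2 + b1^2 dx^2 + b2^2 dphi^2]
   has diagonal Ricci tensor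
     [R_tt = -(b1''/b1 + b2''/b2)], [R_xx = b1 b1'' + b1 b1' b2'/b2],
     [R_phiphi = b2 b2'' + b2 b2' b1'/b1],
   and for [b1 = b2'] the Einstein equations collapse to the linear equation
   [f'' = (lam/2) f] (the other components follow by differentiating it).  As [f' > 0]
   this is equivalent to [f'^2 - (lam/2) f^2] being constant, i.e., via [r = f t],
   to [N r ^ 2 - (lam/2) r ^ 2] being constant. *)

Ltac case_index i := destruct i as [|[|[|i]]]; [ | | | exfalso; lia].

Lemma in_oint_between lo hi x y z :
  in_oint lo hi x -> in_oint lo hi y -> Rmin x y <= z <= Rmax x y ->
  in_oint lo hi z.
Proof.
  unfold in_oint, Rmin, Rmax; destruct (Rle_dec x y), lo, hi; simpl; intros; lra.
Qed.

Lemma locally_in_oint lo hi x : in_oint lo hi x -> locally x (in_oint lo hi).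
Proof.
  apply (open_and (fun u : R => Rbar_lt lo u) (fun u : R => Rbar_lt u hi)).
  - apply open_Rbar_gt.
  - apply open_Rbar_lt.
Qed.

Lemma Derive_ext_on_oint lo hi (f g : R -> R) t :
  (forall s, in_oint lo hi s -> f s = g s) -> in_oint lo hi t ->
  Derive f t = Derive g t.
Proof.
  intros Hfg Ht. apply Derive_ext_loc.
  exact (filter_imp _ _ Hfg (locally_in_oint _ _ _ Ht)).
Qed.

Lemma ex_derive_ext_on_oint lo hi (f g : R -> R) t :
  (forall s, in_oint lo hi s -> f s = g s) -> in_oint lo hi t ->
  ex_derive f t -> ex_derive g t.
Proof.
  intros Hfg Ht. apply ex_derive_ext_loc.
  exact (filter_imp _ _ Hfg (locally_in_oint _ _ _ Ht)).
Qed.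

Lemma is_derive_zero_const_on_oint lo hi (h : R -> R) x y :
  (forall s, in_oint lo hi s -> is_derive h s 0) ->
  in_oint lo hi x -> in_oint lo hi y -> h x = h y.
Proof.
  intros Hd Hx Hy.
  destruct (MVT_gen h x y (fun _ => 0)) as [c [_ Hc]]; [| | lra].
  - intros z Hz. apply Hd, (in_oint_between lo hi x y); auto; lra.
  - intros z Hz. apply derivable_continuous_pt. exists 0.
    apply is_derive_Reals, Hd, (in_oint_between lo hi x y); auto.
Qed.

Lemma is_derive_Fint lo hi (N : R -> R) a r :
  (forall s, in_oint lo hi s -> continuous N s) ->
  (forall s, in_oint lo hi s -> N s <> 0) ->
  in_oint lo hi a -> in_oint lo hi r ->
  is_derive (Fint N a) r (/ N r).
Proof.
  intros HNc HN0 Ha Hr.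
  assert (Hc : forall s, in_oint lo hi s -> continuous (fun mu => / N mu) s).
  { intros s Hs. apply continuous_Rinv_comp; auto. }
  apply (is_derive_RInt (fun mu => / N mu) (Fint N a) a r); [| auto].
  generalize (locally_in_oint _ _ _ Hr). apply filter_imp. intros b Hb.
  apply (RInt_correct (V := R_CompleteNormedModule)).
  apply (ex_RInt_continuous (V := R_CompleteNormedModule)).
  intros z Hz. apply Hc, (in_oint_between lo hi a b); auto.
Qed.

Lemma Derive_inverse_Fint lo hi tlo thi (N : R -> R) a (Finv : R -> R) t :
  (forall s, in_oint lo hi s -> continuous N s) ->
  (forall s, in_oint lo hi s -> N s <> 0) ->
  in_oint lo hi a ->
  (forall s, in_oint tlo thi s -> in_oint lo hi (Finv s) /\ Fint N a (Finv s) = s) ->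
  in_oint tlo thi t -> ex_derive Finv t ->
  Derive Finv t = N (Finv t).
Proof.
  intros HNc HN0 Ha Hinv Ht HdF.
  destruct (Hinv t Ht) as [Hr _].
  assert (Hcomp := is_derive_comp _ _ _ _ _
    (is_derive_Fint lo hi N a _ HNc HN0 Ha Hr) (Derive_correct _ _ HdF)).
  assert (Hid : is_derive (fun s => Fint N a (Finv s)) t 1).
  { apply (is_derive_ext_loc (fun s => s)); [| apply (is_derive_id t)].
    apply (filter_imp _ _ (fun s Hs => eq_sym (proj2 (Hinv s Hs)))
                      (locally_in_oint _ _ _ Ht)). }
  assert (E := is_derive_unique _ _ _ Hid).
  rewrite (is_derive_unique _ _ _ Hcomp) in E.
  unfold scal in E; simpl in E; unfold mult in E; simpl in E.
  specialize (HN0 _ Hr).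
  apply (f_equal (fun x => x * N (Finv t))) in E.
  field_simplify in E; lra.
Qed.

Lemma linear_ode_iff_first_integral lo hi (f : R -> R) k t0 :
  in_oint lo hi t0 ->
  (forall t, in_oint lo hi t -> ex_derive f t /\ ex_derive (Derive f) t) ->
  (forall t, in_oint lo hi t -> Derive f t <> 0) ->
  (forall t, in_oint lo hi t -> Derive (Derive f) t = k * f t) <->
  exists c, forall t, in_oint lo hi t -> Derive f t ^ 2 = k * f t ^ 2 + c.
Proof.
  intros Ht0 Hd Hf'. split.
  - intros Hode.
    set (h := fun s => Derive f s ^ 2 - k * f s ^ 2).
    exists (h t0). intros t Ht.
    assert (Hh : forall s, in_oint lo hi s -> is_derive h s 0).
    { intros s Hs. destruct (Hd s Hs). unfold h. auto_derive; [auto |].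
      change (fun x : R => Derive f x) with (Derive f). change (fun x : R => f x) with f.
      rewrite Hode by exact Hs. ring. }
    rewrite <- (is_derive_zero_const_on_oint lo hi h t t0 Hh Ht Ht0). unfold h. ring.
  - intros [c Hc] t Ht. destruct (Hd t Ht) as [Hd1 Hd2].
    assert (D1 : is_derive (fun s => Derive f s ^ 2) t
                   (2 * Derive f t * Derive (Derive f) t)).
    { auto_derive; [exact Hd2 |].
      change (fun x : R => Derive f x) with (Derive f). ring. }
    assert (D2 : is_derive (fun s => k * f s ^ 2 + c) t (2 * k * f t * Derive f t)).
    { auto_derive; [exact Hd1 |]. change (fun x : R => f x) with f. ring. }
    apply (is_derive_ext_loc _ (fun s => k * f s ^ 2 + c)) in D1.
    2: exact (filter_imp _ _ Hc (locally_in_oint _ _ _ Ht)).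
    assert (E := is_derive_unique _ _ _ D1). rewrite (is_derive_unique _ _ _ D2) in E.
    specialize (Hf' t Ht).
    apply (Rmult_eq_reg_l (2 * Derive f t)); lra.
Qed.

(* Curvature of a metric whose components depend on the coordinate [t = p 0] only:
   the formulas of [christoffel] and [ricci] with [pd] replaced by [pd_t]. *)
Definition pd_t (i : nat) (H : R -> R) (t : R) : R :=
  if Nat.eqb i 0 then Derive H t else 0.

Definition ginv_t (G : nat -> nat -> R -> R) (k l : nat) (t : R) : R :=
  cof3 (fun a b => G a b t) l k / det3 (fun a b => G a b t).

Definition christoffel_t (G : nat -> nat -> R -> R) (k i j : nat) (t : R) : R :=
  / 2 * sum3 (fun l => ginv_t G k l t *
     (pd_t i (G j l) t + pd_t j (G i l) t - pd_t l (G i j) t)).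

Definition ricci_t (G : nat -> nat -> R -> R) (i j : nat) (t : R) : R :=
  sum3 (fun k => pd_t k (christoffel_t G k i j) t)
  - sum3 (fun k => pd_t j (christoffel_t G k k i) t)
  + sum3 (fun k => sum3 (fun l => christoffel_t G k k l t * christoffel_t G l i j t))
  - sum3 (fun k => sum3 (fun l => christoffel_t G k j l t * christoffel_t G l k i t)).

Lemma pd_time_dependent i (h : pt -> R) (H : R -> R) p :
  (forall q, h q = H (q 0%nat)) -> pd i h p = pd_t i H (p 0%nat).
Proof.
  intros Hh. unfold pd, pd_t.
  destruct (Nat.eqb i 0) eqn:Ei.
  - apply Nat.eqb_eq in Ei; subst i. apply Derive_ext. intros s. apply Hh.
  - rewrite (Derive_ext _ (fun _ => H (p 0%nat))); [apply Derive_const |].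
    intros s. rewrite Hh. unfold upd. rewrite Nat.eqb_sym, Ei. reflexivity.
Qed.

Section TimeDependentMetric.

Variables (g : metric) (G : nat -> nat -> R -> R).
Hypothesis g_time : forall i j q, g i j q = G i j (q 0%nat).

Lemma ginv_time_dependent k l q : ginv g k l q = ginv_t G k l (q 0%nat).
Proof. unfold ginv, ginv_t, cof3, det3; cbv beta zeta. rewrite !g_time. reflexivity. Qed.

Lemma christoffel_time_dependent k i j q :
  christoffel g k i j q = christoffel_t G k i j (q 0%nat).
Proof.
  unfold christoffel, christoffel_t, sum3.
  rewrite !(pd_time_dependent _ _ (G _ _)) by (intros; apply g_time).
  rewrite !ginv_time_dependent. reflexivity.
Qed.

Lemma ricci_time_dependent i j q : ricci g i j q = ricci_t G i j (q 0%nat).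
Proof.
  unfold ricci, ricci_t, sum3.
  rewrite !(pd_time_dependent _ _ (christoffel_t G _ _ _))
    by (intros; apply christoffel_time_dependent).
  rewrite !christoffel_time_dependent. reflexivity.
Qed.

Lemma einstein_on_slab_iff (J : R -> Prop) lam :
  einstein_on (fun p : pt => J (p 0%nat)) g lam <->
  forall t, J t -> forall i j, (i < 3)%nat -> (j < 3)%nat ->
    ricci_t G i j t = lam * G i j t.
Proof.
  split.
  - intros H t Ht i j Hi Hj.
    specialize (H (fun _ => t) Ht i j Hi Hj).
    rewrite ricci_time_dependent, g_time in H. exact H.
  - intros H p Hp i j Hi Hj. rewrite ricci_time_dependent, g_time. auto.
Qed.

End TimeDependentMetric.

Definition mwp_profile (b1 b2 : R -> R) (i j : nat) (t : R) : R :=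
  mwp_metric b1 b2 i j (fun _ => t).

Definition mwp_christoffel (b1 b2 : R -> R) (k i j : nat) (t : R) : R :=
  match k, i, j with
  | 0%nat, 1%nat, 1%nat => b1 t * Derive b1 t
  | 0%nat, 2%nat, 2%nat => b2 t * Derive b2 t
  | 1%nat, 0%nat, 1%nat | 1%nat, 1%nat, 0%nat => Derive b1 t / b1 t
  | 2%nat, 0%nat, 2%nat | 2%nat, 2%nat, 0%nat => Derive b2 t / b2 t
  | _, _, _ => 0
  end.

Definition mwp_ricci (b1 b2 : R -> R) (i j : nat) (t : R) : R :=
  match i, j with
  | 0%nat, 0%nat => - (Derive (Derive b1) t / b1 t + Derive (Derive b2) t / b2 t)
  | 1%nat, 1%nat => b1 t * Derive (Derive b1) t + b1 t * Derive b1 t * Derive b2 t / b2 t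
  | 2%nat, 2%nat => b2 t * Derive (Derive b2) t + b2 t * Derive b2 t * Derive b1 t / b1 t
  | _, _ => 0
  end.

Lemma Derive_mwp_profile b1 b2 i j t :
  ex_derive b1 t -> ex_derive b2 t ->
  Derive (mwp_profile b1 b2 i j) t =
  match i, j with
  | 1%nat, 1%nat => 2 * b1 t * Derive b1 t
  | 2%nat, 2%nat => 2 * b2 t * Derive b2 t
  | _, _ => 0
  end.
Proof.
  intros D1 D2. unfold mwp_profile, mwp_metric.
  destruct i as [|[|[|i]]], j as [|[|[|j]]];
    rewrite ?Derive_pow, ?Derive_const by assumption; simpl; ring.
Qed.

Lemma christoffel_t_mwp b1 b2 t k i j :
  b1 t <> 0 -> b2 t <> 0 -> ex_derive b1 t -> ex_derive b2 t ->
  (k < 3)%nat -> (i < 3)%nat -> (j < 3)%nat ->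
  christoffel_t (mwp_profile b1 b2) k i j t = mwp_christoffel b1 b2 k i j t.
Proof.
  intros H1 H2 D1 D2 Hk Hi Hj.
  case_index k; case_index i; case_index j;
    unfold christoffel_t, sum3, ginv_t, cof3, det3; cbn [pd_t Nat.eqb];
    rewrite ?Derive_mwp_profile by assumption;
    simpl; field; auto.
Qed.

Lemma Derive_mul_Derive_self (b : R -> R) t :
  ex_derive b t -> ex_derive (Derive b) t ->
  Derive (fun s => b s * Derive b s) t = Derive b t ^ 2 + b t * Derive (Derive b) t.
Proof.
  intros D1 D2. apply is_derive_unique. auto_derive; [auto |].
  change (fun x : R => b x) with b; change (fun x : R => Derive b x) with (Derive b). ring.
Qed.

Lemma Derive_log_deriv (b : R -> R) t :
  b t <> 0 -> ex_derive b t -> ex_derive (Derive b) t ->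
  Derive (fun s => Derive b s / b s) t =
  Derive (Derive b) t / b t - (Derive b t / b t) ^ 2.
Proof.
  intros H0 D1 D2. apply is_derive_unique. auto_derive; [auto |].
  change (fun x : R => b x) with b. change (fun x : R => Derive b x) with (Derive b).
  field. exact H0.
Qed.

Section WarpedRicci.

Variables (b1 b2 : R -> R) (t : R).
Hypothesis regular_near :
  locally t (fun s => b1 s <> 0 /\ b2 s <> 0 /\ ex_derive b1 s /\ ex_derive b2 s).
Hypotheses (D1 : ex_derive (Derive b1) t) (D2 : ex_derive (Derive b2) t).

Lemma Derive_christoffel_t_mwp k i j :
  (k < 3)%nat -> (i < 3)%nat -> (j < 3)%nat ->
  Derive (christoffel_t (mwp_profile b1 b2) k i j) t =
  Derive (mwp_christoffel b1 b2 k i j) t.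
Proof.
  intros Hk Hi Hj. apply Derive_ext_loc.
  generalize regular_near. apply filter_imp. intros s [H1 [H2 [E1 E2]]].
  apply christoffel_t_mwp; auto.
Qed.

Lemma ricci_t_mwp i j :
  (i < 3)%nat -> (j < 3)%nat ->
  ricci_t (mwp_profile b1 b2) i j t = mwp_ricci b1 b2 i j t.
Proof.
  intros Hi Hj.
  destruct (locally_singleton _ _ regular_near) as [H1 [H2 [E1 E2]]].
  case_index i; case_index j;
    unfold ricci_t, sum3; cbn [pd_t Nat.eqb];
    rewrite ?Derive_christoffel_t_mwp, ?christoffel_t_mwp by (assumption || lia);
    unfold mwp_christoffel, mwp_ricci; cbv beta iota;
    rewrite ?Derive_mul_Derive_self, ?Derive_log_deriv, ?Derive_const by assumption;
    field; auto.
Qed.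

End WarpedRicci.

Lemma einstein_mwp_iff_ode lo hi (b1 f : R -> R) lam :
  (forall t, in_oint lo hi t -> b1 t = Derive f t) ->
  (forall t, in_oint lo hi t -> f t <> 0 /\ Derive f t <> 0) ->
  (forall t, in_oint lo hi t ->
     ex_derive f t /\ ex_derive (Derive f) t /\ ex_derive (Derive (Derive f)) t) ->
  einstein_on (fun p : pt => in_oint lo hi (p 0%nat)) (mwp_metric b1 f) lam <->
  forall t, in_oint lo hi t -> Derive (Derive f) t = lam / 2 * f t.
Proof.
  intros Hb1 Hf0 Hd.
  assert (Db1 : forall t, in_oint lo hi t -> Derive b1 t = Derive (Derive f) t).
  { intros t Ht. exact (Derive_ext_on_oint lo hi _ _ t Hb1 Ht). }
  assert (DDb1 : forall t, in_oint lo hi t ->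
            Derive (Derive b1) t = Derive (Derive (Derive f)) t).
  { intros t Ht. exact (Derive_ext_on_oint lo hi _ _ t Db1 Ht). }
  assert (Ric : forall t, in_oint lo hi t -> forall i j, (i < 3)%nat -> (j < 3)%nat ->
            ricci_t (mwp_profile b1 f) i j t = mwp_ricci b1 f i j t).
  { intros t Ht. apply ricci_t_mwp.
    - generalize (locally_in_oint _ _ _ Ht). apply filter_imp. intros s Hs.
      destruct (Hf0 s Hs) as [F0 F1]; destruct (Hd s Hs) as [E1 [E2 _]].
      rewrite Hb1 by exact Hs. repeat split; auto.
      apply (ex_derive_ext_on_oint lo hi (Derive f)); auto.
      intros u Hu. symmetry. auto.
    - apply (ex_derive_ext_on_oint lo hi (Derive (Derive f))); [| auto | apply Hd, Ht].
      intros u Hu. symmetry. auto.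
    - apply Hd, Ht. }
  rewrite (einstein_on_slab_iff _ (mwp_profile b1 f)) by reflexivity.
  split.
  - intros Hein t Ht. specialize (Hein t Ht 2%nat 2%nat ltac:(lia) ltac:(lia)).
    rewrite Ric in Hein by (auto; lia).
    unfold mwp_ricci, mwp_profile, mwp_metric in Hein.
    rewrite Hb1, Db1 in Hein by exact Ht.
    destruct (Hf0 t Ht) as [F0 F1].
    replace (f t * Derive f t * Derive (Derive f) t / Derive f t)
      with (f t * Derive (Derive f) t) in Hein by (field; exact F1).
    apply (Rmult_eq_reg_l (2 * f t)); lra.
  - intros Hode t Ht i j Hi Hj.
    assert (D3 : Derive (Derive (Derive f)) t = lam / 2 * Derive f t).
    { rewrite (Derive_ext_on_oint lo hi _ (fun s => lam / 2 * f s) t Hode Ht).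
      apply Derive_scal. }
    destruct (Hf0 t Ht) as [F0 F1].
    rewrite Ric by assumption.
    case_index i; case_index j; unfold mwp_ricci, mwp_profile, mwp_metric;
      rewrite ?Hb1, ?Db1, ?DDb1, ?D3, ?Hode by exact Ht; field; auto.
Qed.

Theorem proposition6p1
  (rlo rhi : Rbar) (N : R -> R) (a : R)
  (tlo thi : Rbar) (Finv : R -> R) (lam : R) :
  smooth_on (in_oint rlo rhi) N ->
  (forall r, in_oint rlo rhi r -> 0 < N r) ->
  in_oint rlo rhi a ->
  (* Finv : I -> J is the (smooth) inverse of F : J -> I *)
  (forall r, in_oint rlo rhi r ->
     in_oint tlo thi (Fint N a r) /\ Finv (Fint N a r) = r) ->
  (forall t, in_oint tlo thi t ->
     in_oint rlo rhi (Finv t) /\ Fint N a (Finv t) = t) ->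
  smooth_on (in_oint tlo thi) Finv ->
  (* b2 > 0 *)
  (forall t, in_oint tlo thi t -> 0 < Finv t) ->
  (einstein_on (fun p : pt => in_oint tlo thi (p 0%nat))
     (mwp_metric (fun t => N (Finv t)) (fun t => Finv t)) lam
   <->
   exists c2 : R, forall r, in_oint rlo rhi r -> (N r) ^ 2 = lam / 2 * r ^ 2 + c2).
Proof.
  intros HsN HNpos Ha HF Hinv HsF Hpos.
  assert (HN : forall t, in_oint tlo thi t -> Derive Finv t = N (Finv t)).
  { intros t Ht. apply (Derive_inverse_Fint rlo rhi tlo thi N a); auto.
    - intros r Hr. exact (ex_derive_continuous N r (HsN 1%nat r Hr)).
    - intros r Hr. specialize (HNpos r Hr). lra.
    - exact (HsF 1%nat t Ht). }
  assert (HdF : forall t, in_oint tlo thi t -> Derive Finv t <> 0).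
  { intros t Ht. rewrite HN by exact Ht. apply Rgt_not_eq, HNpos, Hinv, Ht. }
  destruct (HF a Ha) as [Ha' _].
  rewrite (einstein_mwp_iff_ode tlo thi _ Finv lam).
  - rewrite (linear_ode_iff_first_integral tlo thi Finv (lam / 2) (Fint N a a));
      [| exact Ha' | intros t Ht; exact (conj (HsF 1%nat t Ht) (HsF 2%nat t Ht)) | exact HdF].
    split; intros [c Hc]; exists c.
    + intros r Hr. destruct (HF r Hr) as [Ht Er].
      rewrite <- Er, <- HN by exact Ht. apply Hc, Ht.
    + intros t Ht. rewrite HN by exact Ht. apply Hc, Hinv, Ht.
  - intros t Ht. symmetry. apply HN, Ht.
  - intros t Ht. split; [apply Rgt_not_eq, Hpos, Ht | apply HdF, Ht].
  - intros t Ht. exact (conj (HsF 1%nat t Ht) (conj (HsF 2%nat t Ht) (HsF 3%nat t Ht))).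
Qed.
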